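(* Let $\mathcal{M}=\mathcal{M}_1\times\cdots\times\mathcal{M}_n$ with each $\mathcal{M}_i\subset\mathbb{R}^{m_i}$ nonempty compact convex, and let $f:\mathbb{R}^m\to\mathbb{R}$ be differentiable. Suppose there is a positive semidefinite matrix $H$, partitioned into blocks $H_{ij}$ conformally with the blocks of $x$, such that $f(y)\le f(x)+\langle y-x,\nabla f(x)\rangle+\frac12(y-x)^TH(y-x)$ for all $x,y\in\mathcal{M}$. Define $B_i=\sup_{x_i\in\mathcal{M}_i}x_i^TH_{ii}x_i$, $\mu_{ij}=\sup_{x_i\in\mathcal{M}_i,x_j\in\mathcal{M}_j}x_i^TH_{ij}x_j$, $B=\frac1n\sum_{i=1}^nB_i$, and $\mu=\frac{1}{n(n-1)}\sum_{i\ne j}\mu_{ij}$. Then for every $\tau=1,\dots,n$, $$C_f^{\tau}\le 4\big(\tau B+\tau(\tau-1)\mu\big).$$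
   Context: Notation: $x=(x_{(1)},\dots,x_{(n)})$; for $S\subseteq[n]$, $x_{(S)}$ is the subvector of blocks in $S$, $\mathcal{M}^{(S)}=\prod_{i\in S}\mathcal{M}_i$, $\nabla_{(S)}f$ the partial gradient, $s_{[S]}\in\mathbb{R}^m$ is $s_{(S)}$ padded with zeros outside $S$. Set curvature: $C_f^{(S)}=\sup\frac{2}{\gamma^2}\big(f(y)-f(x)-\langle y_{(S)}-x_{(S)},\nabla_{(S)}f(x)\rangle\big)$ over $x\in\mathcal{M}$, $s_{(S)}\in\mathcal{M}^{(S)}$, $\gamma\in(0,1]$, $y=x+\gamma(s_{[S]}-x_{[S]})$. Expected set curvature: $C_f^\tau=\binom{n}{\tau}^{-1}\sum_{S\subseteq[n],|S|=\tau}C_f^{(S)}$. *)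

From HB Require Import structures.
From mathcomp Require Import all_boot all_order all_algebra.
From mathcomp Require Import all_classical all_reals all_analysis.
Set Implicit Arguments. Unset Strict Implicit. Unset Printing Implicit Defensive.
Import Order.TTheory GRing.Theory Num.Theory.
Import numFieldNormedType.Exports.
Local Open Scope classical_set_scope.
Local Open Scope ring_scope.

(* Vectors of R^m with m = m_1 + ... + m_n are column vectors of size
   \sum_i ms i; the block x_(i) is [submxcol x i]. *)

Section Blocks.
Variables (R : realType) (n : nat) (ms : 'I_n -> nat).
Local Notation m := (\sum_(i < n) ms i)%N.

Definition ip k (u v : 'cV[R]_k) : R := (u^T *m v) 0 0.

Definition grad (f : 'cV[R]_m -> R) (x : 'cV[R]_m) : 'cV[R]_m :=
  \col_k ('d f x (delta_mx k 0) : R).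

Definition prodset (Ms : forall i : 'I_n, set 'cV[R]_(ms i)) : set 'cV[R]_m :=
  [set x | forall i, Ms i (submxcol x i)].

Definition padS (S : {set 'I_n}) (s : 'cV[R]_m) : 'cV[R]_m :=
  \mxcol_i (if i \in S then submxcol s i else 0).

Definition partial_ip (S : {set 'I_n}) (f : 'cV[R]_m -> R) (x y : 'cV[R]_m) : R :=
  \sum_(i in S) ip (submxcol (y - x) i) (submxcol (grad f x) i).

Definition set_curv (Ms : forall i : 'I_n, set 'cV[R]_(ms i))
    (f : 'cV[R]_m -> R) (S : {set 'I_n}) : \bar R :=
  ereal_sup [set r : \bar R | exists x s g,
      [/\ prodset Ms x, (forall i, i \in S -> Ms i (submxcol s i)), 0 < g <= 1 &
       r = ((2 / g ^+ 2) * (f (x + g *: (padS S s - padS S x)) - f x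
             - partial_ip S f x (x + g *: (padS S s - padS S x))))%:E]].

Definition exp_set_curv (Ms : forall i : 'I_n, set 'cV[R]_(ms i))
    (f : 'cV[R]_m -> R) (tau : nat) : \bar R :=
  (('C(n, tau))%:R^-1)%:E * \sum_(S : {set 'I_n} | #|S| == tau) set_curv Ms f S.

Definition Bi (Ms : forall i : 'I_n, set 'cV[R]_(ms i)) (H : 'M[R]_m) (i : 'I_n) : R :=
  sup [set ip xi (submxblock H i i *m xi) | xi in Ms i].

Definition muij (Ms : forall i : 'I_n, set 'cV[R]_(ms i)) (H : 'M[R]_m) (i j : 'I_n) : R :=
  sup [set r : R | exists xi xj,
    [/\ Ms i xi, Ms j xj & r = ip xi (submxblock H i j *m xj)]].

Definition Bavg Ms H : R := n%:R^-1 * \sum_(i < n) Bi Ms H i.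
Definition muavg Ms H : R :=
  (n%:R * (n%:R - 1))^-1 * \sum_(i < n) \sum_(j < n | j != i) muij Ms H i j.

End Blocks.

From HB Require Import structures.
From mathcomp Require Import all_boot all_order all_algebra.
From mathcomp Require Import ring lra.
Set Implicit Arguments. Unset Strict Implicit. Unset Printing Implicit Defensive.
Import Order.TTheory GRing.Theory Num.Theory.

(* For fixed S, a feasible point is y = x + g d with d = s_[S] - x_[S]; the
   quadratic upper bound turns the curvature quotient into at most d^T H d.
   By the parallelogram identity and H >= 0, d^T H d <= 2 s_[S]^T H s_[S] +
   2 x_[S]^T H x_[S], and expanding blockwise each of these two terms is at
   most \sum_(i in S) B_i + \sum_(i != j in S) mu_ij.  Averaging over the
   sets of size tau, a block i belongs to a fraction tau/n of them and a pair
   i != j to a fraction tau(tau-1)/(n(n-1)). *)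

Lemma card_supsets (T : finType) (D : {set T}) k : #|D| <= k ->
  #|[set S : {set T} | D \subset S & #|S| == k]| = 'C(#|T| - #|D|, k - #|D|).
Proof.
move=> Dk.
have setDUK (S : {set T}) : D \subset S -> (S :\: D) :|: D = S.
  by move=> DS; rewrite setUC -{2}(setID S D) (setIidPr DS).
have -> : #|T| - #|D| = #|~: D| by rewrite -(cardsC D) addKn.
rewrite -cards_draws -(@card_in_imset _ _ (fun S => S :\: D)); last first.
  move=> S1 S2; rewrite !inE => /andP[DS1 _] /andP[DS2 _] eqD.
  by rewrite -(setDUK _ DS1) -(setDUK _ DS2) eqD.
apply: eq_card => A; rewrite !inE; apply/imsetP/andP => [[S] | [AD /eqP cardA]].
  rewrite inE => /andP[DS /eqP <-] ->; split; first exact: subsetDr.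
  by rewrite cardsD (setIidPr DS).
have AD0 : A :&: D = set0 by apply/eqP; rewrite setI_eq0 disjoints_subset.
exists (A :|: D); first by rewrite inE subsetUr cardsU AD0 cards0 subn0 cardA subnK ?eqxx.
by rewrite setDUl setDv setU0; apply/esym/setDidPl; rewrite disjoints_subset.
Qed.

Lemma card_supsets_small (T : finType) (D : {set T}) k : k < #|D| ->
  #|[set S : {set T} | D \subset S & #|S| == k]| = 0.
Proof.
move=> kD; apply: eq_card0 => S; rewrite inE; apply/negP => /andP[DS /eqP cardS].
by have := subset_leq_card DS; rewrite cardS leqNgt kD.
Qed.

Lemma mul_bin_diag_subn1 n k : 0 < k -> n * 'C(n - 1, k - 1) = k * 'C(n, k).
Proof. by move=> k_gt0; have := mul_bin_diag n (k - 1); rewrite !subn1 prednK. Qed.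

Lemma card_ksets_mem n k (i : 'I_n) : 0 < k ->
  n * #|[set S : {set 'I_n} | #|S| == k & i \in S]| = k * 'C(n, k).
Proof.
move=> k_gt0.
rewrite (eq_card (B := [set S : {set 'I_n} | [set i] \subset S & #|S| == k])); last first.
  by move=> S; rewrite !inE sub1set andbC.
by rewrite card_supsets ?cards1 // card_ord mul_bin_diag_subn1.
Qed.

Lemma card_ksets_mem2 n k (i j : 'I_n) : j != i -> 0 < k ->
  n * (n - 1) * #|[set S : {set 'I_n} | #|S| == k & (i \in S) && (j \in S)]| =
  k * (k - 1) * 'C(n, k).
Proof.
move=> ji k_gt0.
rewrite (eq_card (B := [set S : {set 'I_n} | [set i; j] \subset S & #|S| == k])); last first.
  by move=> S; rewrite !inE subUset !sub1set andbC.
have card_ij : #|[set i; j]| = 2 by rewrite cards2 eq_sym ji.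
have [k_lt2|k_ge2] := ltnP k 2.
  by rewrite card_supsets_small ?card_ij // muln0; case: k k_gt0 k_lt2 => [|[]].
rewrite card_supsets ?card_ij // card_ord.
have diag : (n - 1) * 'C(n - 2, k - 2) = (k - 1) * 'C(n - 1, k - 1).
  by rewrite (subnDA 1 n 1) (subnDA 1 k 1) mul_bin_diag_subn1 ?subn_gt0.
by rewrite -mulnA diag mulnCA mul_bin_diag_subn1 // mulnCA mulnA.
Qed.

Local Open Scope ring_scope.

Lemma sum_ksets_sum_mem (R : numFieldType) n k (F : 'I_n -> R) : (0 < k <= n)%N ->
  \sum_(S : {set 'I_n} | #|S| == k) \sum_(i in S) F i =
  'C(n, k)%:R * (k%:R / n%:R * \sum_i F i).
Proof.
case/andP=> k_gt0 k_le_n; have n_neq0 : n%:R != 0 :> R.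
  by rewrite pnatr_eq0 -lt0n (leq_trans k_gt0).
rewrite (exchange_big_dep predT) //= !mulr_sumr; apply: eq_bigr => i _.
set ksets_i := [set S : {set 'I_n} | #|S| == k & i \in S].
have card_ksets_i : #|ksets_i|%:R = 'C(n, k)%:R * (k%:R / n%:R) :> R.
  by apply: (mulfI n_neq0); rewrite -natrM card_ksets_mem // natrM; field.
rewrite (eq_bigl (fun S => S \in ksets_i)) => [|S]; last by rewrite inE.
by rewrite sumr_const -[_ *+ _]mulr_natr card_ksets_i; ring.
Qed.

Lemma sum_ksets_sum_mem2 (R : numFieldType) n k (G : 'I_n -> 'I_n -> R) :
  (0 < k <= n)%N ->
  \sum_(S : {set 'I_n} | #|S| == k) \sum_(i in S) \sum_(j in S | j != i) G i j =
  'C(n, k)%:R *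
    (k%:R * (k%:R - 1) / (n%:R * (n%:R - 1)) * \sum_i \sum_(j | j != i) G i j).
Proof.
case/andP=> k_gt0 _; rewrite (exchange_big_dep predT) //= !mulr_sumr.
apply: eq_bigr => i _; rewrite (exchange_big_dep (fun j => j != i)) /=; last first.
  by move=> S j _ /andP[].
rewrite !mulr_sumr; apply: eq_bigr => j ji.
have n_gt1 : (1 < n)%N by have := max_card [set i; j]; rewrite cards2 eq_sym ji card_ord.
have natr_subn1 p : (0 < p)%N -> p%:R - 1 = (p - 1)%:R :> R by move=> p_gt0; rewrite natrB.
have nn1_neq0 : n%:R * (n - 1)%:R != 0 :> R.
  by rewrite -natrM pnatr_eq0 muln_eq0 negb_or -!lt0n subn_gt0 n_gt1 ltnW.
set ksets_ij := [set S : {set 'I_n} | #|S| == k & (i \in S) && (j \in S)].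
have card_ksets_ij : #|ksets_ij|%:R =
    'C(n, k)%:R * (k%:R * (k%:R - 1) / (n%:R * (n%:R - 1))) :> R.
  rewrite !natr_subn1 ?(ltnW n_gt1) //; apply: (mulfI nn1_neq0).
  rewrite -!natrM card_ksets_mem2 // !natrM; field.
  by move: nn1_neq0; rewrite mulf_eq0 negb_or andbC.
rewrite (eq_bigl (fun S => S \in ksets_ij)) => [|S]; last by rewrite inE ji andbT andbA.
by rewrite sumr_const -[_ *+ _]mulr_natr card_ksets_ij; ring.
Qed.

(* Imported only here: classical_sets shadows finset lemmas used above (setUC, subsetP). *)
From mathcomp Require Import all_classical all_reals all_analysis.
Import numFieldNormedType.Exports.
Local Open Scope classical_set_scope.

Lemma compact_coord_bounded (R : realType) p (A : set 'cV[R]_p) : compact A ->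
  exists M : R, forall x, A x -> forall k, `|x k 0| <= M.
Proof.
move=> /compact_bounded [M [_ AM]]; exists (M + 1) => x Ax k.
have x_le : mx_norm x <= M + 1 by apply: (AM (M + 1)) => //; rewrite ltrDl.
by apply: le_trans x_le; rewrite mx_normrE; apply: (le_bigmax _ _ (k, 0)).
Qed.

Lemma ip_mulmx_le_coord_bound (R : realType) p q (A : 'M[R]_(p, q)) (u : 'cV[R]_p)
    (v : 'cV[R]_q) (Mu Mv : R) :
  (forall k, `|u k 0| <= Mu) -> (forall l, `|v l 0| <= Mv) ->
  ip u (A *m v) <= \sum_k \sum_l Mu * (`|A k l| * Mv).
Proof.
move=> u_le v_le; apply: le_trans (ler_norm _) _.
rewrite /ip mxE; apply: le_trans (ler_norm_sum _ _ _) _.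
apply: ler_sum => k _; rewrite !mxE normrM.
have Mu_ge0 : 0 <= Mu by apply: le_trans (u_le k).
apply: le_trans (ler_pM (normr_ge0 _) (normr_ge0 _) (u_le k) (ler_norm_sum _ _ _)) _.
rewrite mulr_sumr; apply: ler_sum => l _; rewrite normrM.
by do 2 apply: ler_wpM2l => //.
Qed.

Lemma compact_ip_mulmx_ub (R : realType) p q (A : 'M[R]_(p, q))
    (X : set 'cV[R]_p) (Y : set 'cV[R]_q) : compact X -> compact Y ->
  exists K, forall u v, X u -> Y v -> ip u (A *m v) <= K.
Proof.
move=> /compact_coord_bounded [Mu X_le] /compact_coord_bounded [Mv Y_le].
exists (\sum_k \sum_l Mu * (`|A k l| * Mv)) => u v Xu Yv.
exact: ip_mulmx_le_coord_bound (X_le u Xu) (Y_le v Yv).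
Qed.

Section BlockAlgebra.
Variables (R : realType) (n : nat) (ms : 'I_n -> nat).
Local Notation m := (\sum_(i < n) ms i)%N.

Lemma ip_submxcol (u v : 'cV[R]_m) :
  ip u v = \sum_i ip (submxcol u i) (submxcol v i).
Proof.
rewrite /ip -{1}(submxcolK u) -{1}(submxcolK v) tr_mxcol mul_mxrow_mxcol.
by rewrite summxE.
Qed.

Lemma ip_mulmx_submxblock (u v : 'cV[R]_m) (A : 'M[R]_m) :
  ip u (A *m v) = \sum_i \sum_j ip (submxcol u i) (submxblock A i j *m submxcol v j).
Proof.
rewrite /ip -{1}(submxcolK u) -{1}(submxcolK v) -{1}(submxblockK A).
rewrite tr_mxcol mul_mxblock_mxrow mul_mxrow_mxcol summxE.
by apply: eq_bigr => i _; rewrite mulmx_sumr summxE.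
Qed.

Lemma submxcol_padS S (z : 'cV[R]_m) i :
  submxcol (padS S z) i = if i \in S then submxcol z i else 0.
Proof. exact: mxcolK. Qed.

Lemma submxcolZ (a : R) (z : 'cV[R]_m) i : submxcol (a *: z) i = a *: submxcol z i.
Proof. by apply/matrixP => k l; rewrite !mxE. Qed.

Lemma ipZl k (a : R) (u v : 'cV[R]_k) : ip (a *: u) v = a * ip u v.
Proof. by rewrite /ip linearZ /= -scalemxAl mxE. Qed.

Lemma ipZr k (a : R) (u v : 'cV[R]_k) : ip u (a *: v) = a * ip u v.
Proof. by rewrite /ip -scalemxAr mxE. Qed.

Lemma ip0l k (v : 'cV[R]_k) : ip 0 v = 0.
Proof. by rewrite /ip trmx0 mul0mx mxE. Qed.

Lemma ip0r k (u : 'cV[R]_k) : ip u 0 = 0.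
Proof. by rewrite /ip mulmx0 mxE. Qed.

Lemma ip_mulmx_parallelogram k (A : 'M[R]_k) (a b : 'cV[R]_k) :
  ip (a - b) (A *m (a - b)) + ip (a + b) (A *m (a + b)) =
  2 * ip a (A *m a) + 2 * ip b (A *m b).
Proof.
rewrite /ip !linearD !linearN /= !(mulmxDr, mulmxN, mulmxDl, mulNmx) !mxE.
ring.
Qed.

End BlockAlgebra.

Section SetCurvature.
Variables (R : realType) (n : nat) (ms : 'I_n -> nat).
Local Notation m := (\sum_(i < n) ms i)%N.
(* Under [Set Implicit Arguments] the block index of [Ms] and its hypotheses would become implicit. *)
Unset Implicit Arguments.
Variables (Ms : forall i : 'I_n, set 'cV[R]_(ms i)) (H : 'M[R]_m) (f : 'cV[R]_m -> R).
Hypothesis Ms_compact : forall i, compact (Ms i).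
Hypothesis Ms_convex : forall i, convex_set (Ms i).
Set Implicit Arguments.
Hypothesis H_psd : forall v : 'cV[R]_m, 0 <= ip v (H *m v).
Hypothesis f_quad_ub : forall x y, prodset Ms x -> prodset Ms y ->
  f y <= f x + ip (y - x) (grad f x) + 2^-1 * ip (y - x) (H *m (y - x)).

Lemma Bi_ub (i : 'I_n) (xi : 'cV[R]_(ms i)) :
  Ms i xi -> ip xi (submxblock H i i *m xi) <= Bi Ms H i.
Proof.
move=> Mxi; apply: sup_upper_bound; last by exists xi.
split; first by exists (ip xi (submxblock H i i *m xi)), xi.
have [K K_ub] := compact_ip_mulmx_ub (submxblock H i i) (Ms_compact i) (Ms_compact i).
by exists K => _ [y My <-]; apply: K_ub.
Qed.

Lemma muij_ub (i j : 'I_n) (xi : 'cV[R]_(ms i)) (xj : 'cV[R]_(ms j)) :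
  Ms i xi -> Ms j xj -> ip xi (submxblock H i j *m xj) <= muij Ms H i j.
Proof.
move=> Mxi Mxj; apply: sup_upper_bound; last by exists xi, xj.
split; first by exists (ip xi (submxblock H i j *m xj)), xi, xj.
have [K K_ub] := compact_ip_mulmx_ub (submxblock H i j) (Ms_compact i) (Ms_compact j).
by exists K => _ [y [z [My Mz ->]]]; apply: K_ub.
Qed.

Definition quad_bound (S : {set 'I_n}) : R :=
  \sum_(i in S) (Bi Ms H i + \sum_(j in S | j != i) muij Ms H i j).

Lemma quad_padS_le (S : {set 'I_n}) z : (forall i, i \in S -> Ms i (submxcol z i)) ->
  ip (padS S z) (H *m padS S z) <= quad_bound S.
Proof.
move=> MzS; rewrite ip_mulmx_submxblock /quad_bound [X in _ <= X]big_mkcond /=.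
apply: ler_sum => i _; rewrite submxcol_padS; case: ifPn => iS; last first.
  by rewrite big1 // => j _; rewrite ip0l.
rewrite (bigD1 i) //= submxcol_padS iS; apply: lerD; first exact: Bi_ub (MzS i iS).
rewrite [X in _ <= X]big_mkcond [X in X <= _]big_mkcond /=; apply: ler_sum => j _.
rewrite submxcol_padS; have [jS|jNS] := boolP (j \in S); last first.
  by rewrite mulmx0 ip0r; case: ifP.
by case: ifP => // _; apply: muij_ub; apply: MzS.
Qed.

Lemma quad_padS_diff_le (S : {set 'I_n}) x s :
  prodset Ms x -> (forall i, i \in S -> Ms i (submxcol s i)) ->
  ip (padS S s - padS S x) (H *m (padS S s - padS S x)) <= 4 * quad_bound S.
Proof.
move=> Mx MsS.
have := ip_mulmx_parallelogram H (padS S s) (padS S x).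
have := H_psd (padS S s + padS S x).
have := quad_padS_le MsS; have := @quad_padS_le S x (fun i _ => Mx i).
lra.
Qed.

Lemma prodset_step (S : {set 'I_n}) x s g :
  prodset Ms x -> (forall i, i \in S -> Ms i (submxcol s i)) ->
  0 <= g -> g <= 1 -> prodset Ms (x + g *: (padS S s - padS S x)).
Proof.
move=> Mx MsS g_ge0 g_le1 i.
rewrite submxcolD submxcolZ submxcolB !submxcol_padS.
case: ifPn => iS; last by rewrite subrr scaler0 addr0; apply: Mx.
have := Ms_convex i _ _ (Itv01 g_ge0 g_le1) (mem_set (MsS i iS)) (mem_set (Mx i)).
rewrite inE; congr (Ms i _).
change (g *: submxcol s i + (1 - g) *: submxcol x i =
        submxcol x i + g *: (submxcol s i - submxcol x i)).
by rewrite scalerBl scale1r scalerBr addrCA addrA addrC.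
Qed.

Lemma partial_ip_supported (S : {set 'I_n}) x d :
  (forall i, i \notin S -> submxcol d i = 0) ->
  partial_ip S f x (x + d) = ip d (grad f x).
Proof.
move=> d_supp; rewrite ip_submxcol /partial_ip [LHS]big_mkcond /= addrAC subrr add0r.
by apply: eq_bigr => i _; case: ifPn => // iS; rewrite d_supp // ip0l.
Qed.

Lemma curv_quotient_le (S : {set 'I_n}) x s g :
  prodset Ms x -> (forall i, i \in S -> Ms i (submxcol s i)) ->
  0 < g <= 1 ->
  2 / g ^+ 2 * (f (x + g *: (padS S s - padS S x)) - f x
                - partial_ip S f x (x + g *: (padS S s - padS S x)))
  <= ip (padS S s - padS S x) (H *m (padS S s - padS S x)).
Proof.
move=> Mx MsS /andP[g_gt0 g_le1]; set d := padS S s - padS S x.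
have Mstep : prodset Ms (x + g *: d) := prodset_step Mx MsS (ltW g_gt0) g_le1.
have yx : x + g *: d - x = g *: d by rewrite addrAC subrr add0r.
rewrite partial_ip_supported => [|i iS]; last first.
  by rewrite submxcolZ submxcolB !submxcol_padS (negbTE iS) subrr scaler0.
have := f_quad_ub Mx Mstep; rewrite yx -scalemxAr !ipZl ipZr.
set q := ip d (H *m d) => f_le.
have gap_le : f (x + g *: d) - f x - g * ip d (grad f x) <= 2^-1 * (g * (g * q)) by lra.
apply: le_trans (ler_wpM2l _ gap_le) _; first by rewrite divr_ge0 // exprn_ge0 // ltW.
have -> : 2 / g ^+ 2 * (2^-1 * (g * (g * q))) = q by field; rewrite gt_eqF.
by [].
Qed.

Lemma set_curv_le (S : {set 'I_n}) : (set_curv Ms f S <= (4 * quad_bound S)%:E)%E.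
Proof.
apply: ge_ereal_sup => _ [x [s [g [Mx MsS g01 ->]]]]; rewrite lee_fin.
exact: le_trans (curv_quotient_le Mx MsS g01) (quad_padS_diff_le Mx MsS).
Qed.

Lemma sum_quad_bound tau : (0 < tau <= n)%N ->
  \sum_(S : {set 'I_n} | #|S| == tau) quad_bound S =
  'C(n, tau)%:R * (tau%:R * Bavg Ms H + tau%:R * (tau%:R - 1) * muavg Ms H).
Proof.
move=> tau_range; rewrite /quad_bound.
under eq_bigr do rewrite big_split /=.
rewrite big_split /= sum_ksets_sum_mem // sum_ksets_sum_mem2 // /Bavg /muavg.
ring.
Qed.

End SetCurvature.

Theorem theorem3 (R : realType) (n : nat) (ms : 'I_n -> nat)
  (Ms : forall i : 'I_n, set 'cV[R]_(ms i))
  (f : 'cV[R]_(\sum_(i < n) ms i) -> R)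
  (H : 'M[R]_(\sum_(i < n) ms i)) :
  (forall i, Ms i !=set0) ->
  (forall i, compact (Ms i)) ->
  (forall i, convex_set (Ms i)) ->
  (forall x, differentiable f x) ->
  (forall v : 'cV[R]_(\sum_(i < n) ms i), 0 <= ip v (H *m v)) ->
  (forall x y, prodset Ms x -> prodset Ms y ->
     f y <= f x + ip (y - x) (grad f x) + 2^-1 * ip (y - x) (H *m (y - x))) ->
  forall tau : nat, (1 <= tau <= n)%N ->
  (exp_set_curv Ms f tau <=
    (4 * (tau%:R * Bavg Ms H + tau%:R * (tau%:R - 1) * muavg Ms H))%:E)%E.
Proof.
move=> _ Ms_compact Ms_convex _ H_psd f_quad_ub tau tau_range.
have C_neq0 : 'C(n, tau)%:R != 0 :> R.
  by rewrite pnatr_eq0 -lt0n bin_gt0; case/andP: tau_range.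
rewrite /exp_set_curv; apply: le_trans (_ : _ <= ('C(n, tau)%:R^-1)%:E *
    \sum_(S : {set 'I_n} | #|S| == tau) (4 * quad_bound Ms H S)%:E)%E _.
  apply: lee_wpmul2l; first by rewrite lee_fin invr_ge0.
  by apply: lee_sum => S _; apply: set_curv_le.
by rewrite sumEFin -EFinM lee_fin -mulr_sumr sum_quad_bound // mulrCA mulKf.
Qed.
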